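(* Let $Q = R_0(u_0) \leftarrow A_1 \wedge \cdots \wedge A_m$ be a conjunctive query with $var(Q)=\{X_1,\ldots,X_k\}$, equipped with an arbitrary set of functional dependencies on its relations, and assume $Q=chase(Q)$. Let $s(Q)$ be the optimal value of the following linear program in the $2^k$ real variables $h(S)$, $S\subseteq[k]$ (with $h(\emptyset)=0$): \begin{align*} \text{maximize } \quad & h(u_0)\\ \text{subject to } \quad & h(u_i)\le 1 \quad \text{for all } i=1,\ldots,m,\\ & h(\{t\}\mid\{i_1,\ldots,i_j\})=0 \quad \text{for each induced dependency } X_{i_1},\ldots,X_{i_j}\to X_t \text{ in } F(Q),\\ & h(\{i\}\mid [k]\setminus\{i\})\ge 0 \quad \text{for all } i\in[k],\\ & I(i;j\mid S)\ge 0 \quad \text{for all } i\neq j\in[k] \text{ and } S\subseteq[k]\setminus\{i,j\}. \end{align*} Then for every database $D$ (with nonempty relations) satisfying the functional dependencies, $|Q(D)|\le \mathrm{rmax}(Q,D)^{s(Q)}$.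
   Context: A conjunctive query has the form $Q = R_0(u_0)\leftarrow A_1\wedge\cdots\wedge A_m$, where each body atom is $A_i=R_{j(i)}(u_i)$ for a relation name $R_{j(i)}$ among $R_1,\ldots,R_n$ (a relation name may occur in several atoms, so $m\ge n$), each $u_i$ is a list of (not necessarily distinct) variables of length equal to the arity of $R_{j(i)}$, and every variable of the head list $u_0$ occurs in some $u_i$, $i\ge1$. $var(Q)$ is the set of all variables of $Q$. A database $D$ consists of a finite universe $U$ and a finite relation $R_j^D$ over $U$ for each relation name. The answer $Q(D)$ is the set of tuples $\theta(u_0)$ over all maps $\theta: var(Q)\to U$ such that $\theta(u_i)\in R_{j(i)}^D$ for every $i\ge1$. $\mathrm{rmax}(Q,D)$ denotes the number of tuples in the largest of the relations $R_1^D,\ldots,R_n^D$. A functional dependency (FD) $V\to a$ on a relation $R$, where $V$ is a set of attribute positions of $R$ and $a$ a position, is satisfied by $D$ if any two tuples of $R^D$ agreeing on all positions in $V$ also agree on position $a$. Each FD $V\to a$ on $R$ and each body atom $R(u)$ induce the dependency among query variables $\{u[p]:p\in V\}\to u[a]$; $F(Q)$ denotes the set of all such induced dependencies. $Q=chase(Q)$ means: no atom occurs twice in the body, and for every relation $R$, every FD $V\to a$ on $R$ and every two body atoms $R(u),R(u')$, if $u[p]=u'[p]$ for all $p\in V$ then $u[a]=u'[a]$. Linear-program notation: for a variable list $u$, $h(u)$ means $h(S_u)$ where $S_u\subseteq[k]$ is the set of indices of variables occurring in $u$. For $A,B\subseteq[k]$, $h(A\mid B):=h(A\cup B)-h(B)$,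 and $I(i;j\mid S):=h(\{i\}\cup S)+h(\{j\}\cup S)-h(S)-h(\{i,j\}\cup S)$. (These constraints are the Shannon information inequalities with $h(S)$ playing the role of the joint entropy of $\{X_s: s\in S\}$.) *)

From Stdlib Require Import Reals.
From mathcomp Require Import all_boot.
Set Implicit Arguments. Unset Strict Implicit. Unset Printing Implicit Defensive.

(* Variables of the query are X_1..X_k, represented by 'I_k.
   Relation names R_1..R_n are represented by 'I_n, with arity ar j.
   A body atom R_j(u) is a dependent pair (j, u) with u : (ar j).-tuple 'I_k. *)
Definition atom (k n : nat) (ar : 'I_n -> nat) : Type :=
  {j : 'I_n & (ar j).-tuple 'I_k}.

Definition atom_vars k n (ar : 'I_n -> nat) (A : atom k ar) : {set 'I_k} :=
  [set x in val (tagged A)].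

(* An arbitrary set of functional dependencies: F j V a means that
   V -> a (V a set of positions, a a position) is an FD on relation R_j. *)
Definition fds (n : nat) (ar : 'I_n -> nat) : Type :=
  forall j : 'I_n, {set 'I_(ar j)} -> 'I_(ar j) -> Prop.

Definition db (n : nat) (ar : 'I_n -> nat) (U : finType) : Type :=
  forall j : 'I_n, {set (ar j).-tuple U}.

Definition db_sat_fds n (ar : 'I_n -> nat) (U : finType) (F : fds ar) (D : db ar U) : Prop :=
  forall j V a, F j V a -> forall t t', t \in D j -> t' \in D j ->
    (forall p, p \in V -> tnth t p = tnth t' p) -> tnth t a = tnth t' a.

(* Q = chase(Q): no repeated atom, and the FDs are already enforced on the
   variable tuples of any two atoms over the same relation. *)
Definition is_chased k n (ar : 'I_n -> nat) (F : fds ar) (body : seq (atom k ar)) : Prop :=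
  uniq body /\
  forall j V a, F j V a -> forall t t' : (ar j).-tuple 'I_k,
    (existT _ j t : atom k ar) \in body -> (existT _ j t' : atom k ar) \in body ->
    (forall p, p \in V -> tnth t p = tnth t' p) -> tnth t a = tnth t' a.

Definition holds k n (ar : 'I_n -> nat) (U : finType) (body : seq (atom k ar))
  (D : db ar U) (theta : {ffun 'I_k -> U}) : bool :=
  all (fun A => map_tuple theta (tagged A) \in D (tag A)) body.

Definition answer k n (ar : 'I_n -> nat) (U : finType) (a0 : nat) (u0 : a0.-tuple 'I_k)
  (body : seq (atom k ar)) (D : db ar U) : {set a0.-tuple U} :=
  [set map_tuple theta u0 | theta : {ffun 'I_k -> U} in [pred theta | holds body D theta]].

Definition rmax n (ar : 'I_n -> nat) (U : finType) (D : db ar U) : nat :=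
  \max_(j < n) #|D j|.

Definition mutinf k (h : {set 'I_k} -> R) (i j : 'I_k) (S : {set 'I_k}) : R :=
  Rminus (Rminus (Rplus (h (i |: S)) (h (j |: S))) (h S)) (h (i |: (j |: S))).

(* feasibility for the linear program; the induced dependency
   {u[p] : p in V} -> u[a} of an FD V -> a on relation tag A and atom A gives
   h({u[a]} | {u[p] : p in V}) = 0. *)
Definition lp_feasible k n (ar : 'I_n -> nat) (F : fds ar) (body : seq (atom k ar))
  (h : {set 'I_k} -> R) : Prop :=
  h set0 = R0 /\
  (forall A, A \in body -> Rle (h (atom_vars A)) R1) /\
  (forall A, A \in body -> forall V a, F (tag A) V a ->
     Rminus (h ([set tnth (tagged A) a] :|: [set tnth (tagged A) p | p in V]))
            (h [set tnth (tagged A) p | p in V]) = R0) /\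
  (forall i : 'I_k, Rle R0 (Rminus (h setT) (h (setT :\ i)))) /\
  (forall (i j : 'I_k) (S : {set 'I_k}), i != j -> i \notin S -> j \notin S ->
     Rle R0 (mutinf h i j S)).

Definition lp_opt k n (ar : 'I_n -> nat) (F : fds ar) (body : seq (atom k ar))
  (a0 : nat) (u0 : a0.-tuple 'I_k) (s : R) : Prop :=
  (exists h, lp_feasible F body h /\ h [set x in val u0] = s) /\
  (forall h, lp_feasible F body h -> Rle (h [set x in val u0]) s).

From Pilot Require Import Defs.
From Stdlib Require Import Reals Lra Psatz.
From HB Require Import structures.
From mathcomp Require Import all_boot.
Set Implicit Arguments. Unset Strict Implicit. Unset Printing Implicit Defensive.

(* Fix one satisfying valuation per answer tuple; this
   gives a set T of valuations theta : var(Q) -> U, on which projection to the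
   head variables u0 is injective.  Put the uniform distribution on T and let
   H(S) be the Shannon entropy of the projection of theta onto the variables S.
   Then
   - H is a polymatroid (H(set0) = 0, monotone, submodular), so it satisfies
     all Shannon constraints of the linear program;
   - H(vars of an atom) <= ln |R_j^D| <= ln rmax, since the projection onto an
     atom takes at most |R_j^D| values;
   - H({u[a]} | {u[V]}) = 0 for every induced dependency, since D satisfies
     the FDs;
   - H(u0) = ln |T| = ln |Q(D)| by injectivity.
   Hence c * H is feasible for every c >= 0 with c * ln rmax <= 1, which gives
   ln |Q(D)| <= s * ln rmax and therefore |Q(D)| <= rmax ^ s. *)

HB.instance Definition _ := Monoid.isComLaw.Build R R0 Rplus
  (fun a b c => esym (Rplus_assoc a b c)) Rplus_comm Rplus_0_l.

Local Notation "\rsum_ ( i 'in' A ) F" := (\big[Rplus/R0]_(i in A) F)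
  (at level 41, F at level 41, i, A at level 50).

Local Open Scope R_scope.

Lemma sumR_le (I : finType) (A : {pred I}) (F G : I -> R) :
  (forall i, i \in A -> F i <= G i) -> \rsum_(i in A) F i <= \rsum_(i in A) G i.
Proof.
move=> FG; apply: (big_ind2 (fun x y => x <= y)) => //; first exact: Rle_refl.
by move=> a b c d; apply: Rplus_le_compat.
Qed.

Lemma sumR_const (I : finType) (A : {pred I}) (x : R) :
  \rsum_(i in A) x = INR #|A| * x.
Proof.
rewrite big_const; elim: #|A| => [|m IH]; first by rewrite /= Rmult_0_l.
by rewrite iterS IH S_INR; ring.
Qed.

Lemma sumR_mull (I : finType) (A : {pred I}) (F : I -> R) (c : R) :
  c * (\rsum_(i in A) F i) = \rsum_(i in A) (c * F i).
Proof. exact: (big_morph (Rmult c) (Rmult_plus_distr_l c) (Rmult_0_r c)). Qed.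

Lemma sumR_mulr (I : finType) (A : {pred I}) (F : I -> R) (c : R) :
  (\rsum_(i in A) F i) * c = \rsum_(i in A) (F i * c).
Proof. by rewrite Rmult_comm sumR_mull; apply: eq_bigr => i _; rewrite Rmult_comm. Qed.

Lemma sumR_opp (I : finType) (A : {pred I}) (F : I -> R) :
  \rsum_(i in A) (- F i) = - (\rsum_(i in A) F i).
Proof. by rewrite (big_morph Ropp Ropp_plus_distr Ropp_0). Qed.

Lemma sumR_guard (I : finType) (A : {set I}) (P : pred I) (F : I -> R) :
  \rsum_(i in A) (if P i then F i else R0) = \rsum_(i in [set i in A | P i]) F i.
Proof. by rewrite -big_mkcondr; apply: eq_bigl => i; rewrite inE. Qed.

Lemma sumR_count (I : finType) (A : {set I}) (P : pred I) (x : R) :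
  \rsum_(i in A) (if P i then x else R0) = INR #|[set i in A | P i]| * x.
Proof. by rewrite sumR_guard sumR_const. Qed.

Lemma INR_gt0 m : (0 < m)%N -> 0 < INR m.
Proof. by move=> /ltP; apply: lt_0_INR. Qed.

Lemma INR_leq m p : (m <= p)%N -> INR m <= INR p.
Proof. by move=> /leP; apply: le_INR. Qed.

Lemma sum_inv_le1 (I : finType) (C : {set I}) (w : I -> nat) :
  (forall i, i \in C -> (#|C| <= w i)%N) -> \rsum_(i in C) / INR (w i) <= 1.
Proof.
move=> Cw; have [C0|Cpos] := posnP #|C|.
  by rewrite big_pred0; [lra | move=> i; apply/negbTE; rewrite (card0_eq C0)].
have Cgt0 := INR_gt0 Cpos.
apply: (Rle_trans _ (\rsum_(i in C) / INR #|C|)).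
  by apply: sumR_le => i Ci; apply: Rinv_le_contravar => //; apply: INR_leq (Cw i Ci).
by rewrite sumR_const; right; field; lra.
Qed.

Lemma ln_le_sub1 y : 0 < y -> ln y <= y - 1.
Proof. by move=> y0; have := exp_ineq1_le (ln y); rewrite exp_ln //; lra. Qed.

Lemma ln_le_ln x y : 0 < x -> x <= y -> ln x <= ln y.
Proof.
move=> x0; case/Rle_lt_or_eq_dec => [xy|<-]; last exact: Rle_refl.
by apply: Rlt_le; apply: ln_increasing.
Qed.

(* ln of a natural number is nonnegative (ln 0 = 0 by convention). *)
Lemma ln_nat_ge0 m : 0 <= ln (INR m).
Proof.
case: m => [|m].
  by rewrite /ln; case: Rlt_dec => [/Rlt_irrefl //|_]; apply: Rle_refl.
rewrite -ln_1; apply: ln_le_ln; first lra.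
by rewrite S_INR; have := pos_INR m; lra.
Qed.

Lemma sum_ln_le0 (I : finType) (T : {set I}) (q : I -> R) :
  (forall t, t \in T -> 0 < q t) -> \rsum_(t in T) q t <= INR #|T| ->
  \rsum_(t in T) ln (q t) <= 0.
Proof.
move=> q_gt0 q_sum; apply: (Rle_trans _ (\rsum_(t in T) (q t - 1))).
  by apply: sumR_le => t Tt; apply: ln_le_sub1 (q_gt0 t Tt).
by rewrite /Rminus big_split /= sumR_opp sumR_const; lra.
Qed.

(* Entropy of the uniform distribution on a nonempty set T of functions
   a : I -> U.  For S : {set I}, the class of a is the set of b in T agreeing
   with a on S; the projection onto S takes the value of a with probability
   |class| / |T|, so its entropy is ln |T| - avg_a ln |class of a|. *)
Section Entropy.
Variables (I U : finType) (T : {set {ffun I -> U}}).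
Hypothesis T_gt0 : (0 < #|T|)%N.

Definition agree (S : {set I}) (a b : {ffun I -> U}) : bool :=
  [forall x in S, a x == b x].

Definition class_size (S : {set I}) (a : {ffun I -> U}) : nat :=
  #|[set b in T | agree S a b]|.

Definition entropy (S : {set I}) : R :=
  ln (INR #|T|) - / INR #|T| * \rsum_(a in T) ln (INR (class_size S a)).

Lemma agree_refl S a : agree S a a.
Proof. by apply/forall_inP. Qed.

Lemma agree_sym S a b : agree S a b -> agree S b a.
Proof. by move/forall_inP=> ab; apply/forall_inP=> x Sx; rewrite eq_sym ab. Qed.

Lemma agree_trans S a b c : agree S a b -> agree S b c -> agree S a c.
Proof.
move/forall_inP=> ab /forall_inP bc; apply/forall_inP=> x Sx.
by rewrite (eqP (ab x Sx)) bc.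
Qed.

Lemma agree_sub (S S' : {set I}) a b : S \subset S' -> agree S' a b -> agree S a b.
Proof. by move=> /subsetP sS /forall_inP ab; apply/forall_inP=> x /sS; apply: ab. Qed.

Lemma agree_setU A B a b : agree A a b -> agree B a b -> agree (A :|: B) a b.
Proof.
move/forall_inP=> Aab /forall_inP Bab; apply/forall_inP=> x; rewrite inE.
by case/orP; [apply: Aab | apply: Bab].
Qed.

Lemma class_sizeR_gt0 S a : a \in T -> 0 < INR (class_size S a).
Proof. by move=> Ta; apply/INR_gt0/card_gt0P; exists a; rewrite inE Ta agree_refl. Qed.

Lemma class_size_agree S a b : agree S a b -> class_size S a = class_size S b.
Proof.
move=> ab; apply: eq_card => c; rewrite !inE; case: (c \in T) => //=.
by apply/idP/idP; [apply: agree_trans (agree_sym ab) | apply: agree_trans ab].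
Qed.

Lemma card_T_gt0 : 0 < INR #|T|.
Proof. exact: INR_gt0. Qed.

Lemma entropy_set0 : entropy set0 = 0.
Proof.
have N0 := card_T_gt0; rewrite /entropy (eq_bigr (fun _ => ln (INR #|T|))).
  by rewrite sumR_const; field; lra.
move=> a _; congr (ln (INR _)); apply: eq_card => b; rewrite !inE.
by apply: andb_idr => _; apply/forall_inP => x; rewrite inE.
Qed.

Lemma entropy_mono (S S' : {set I}) : S \subset S' -> entropy S <= entropy S'.
Proof.
move=> sS; have N0 := card_T_gt0; have Ni0 := Rinv_0_lt_compat _ N0.
suff : \rsum_(a in T) ln (INR (class_size S' a)) <=
       \rsum_(a in T) ln (INR (class_size S a)) by rewrite /entropy; nra.
apply: sumR_le => a Ta; apply: ln_le_ln; first exact: class_sizeR_gt0.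
apply/INR_leq/subset_leq_card/subsetP => b; rewrite !inE.
by case/andP=> -> /(agree_sub sS) ->.
Qed.

Lemma entropy_ext (S S' : {set I}) :
  (forall a, a \in T -> class_size S a = class_size S' a) -> entropy S = entropy S'.
Proof. by move=> SS'; rewrite /entropy (eq_bigr _ (fun a Ta => congr1 (ln \o INR) (SS' a Ta))). Qed.

Lemma entropy_separating S :
  {in T &, forall a b, agree S a b -> a = b} -> entropy S = ln (INR #|T|).
Proof.
move=> sep; rewrite /entropy (eq_bigr (fun _ => 0)); first by rewrite sumR_const; ring.
move=> a Ta; suff -> : class_size S a = 1%N by rewrite ln_1.
rewrite /class_size -(cards1 a); apply: eq_card => b; rewrite !inE.
by apply/andP/eqP => [[Tb /(sep a b Ta Tb)]|->] //; rewrite Ta agree_refl.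
Qed.

(* H(S) <= ln K whenever the reciprocal class sizes sum to at most K
   (that sum is the number of classes). *)
Lemma entropy_le_ln S (K : R) : 0 < K ->
  \rsum_(a in T) / INR (class_size S a) <= K -> entropy S <= ln K.
Proof.
move=> K0 classes; set N := INR #|T|; have N0 : 0 < N := card_T_gt0.
pose q a := N * / K * / INR (class_size S a).
have q_gt0 a : a \in T -> 0 < q a.
  by move=> Ta; apply: Rmult_lt_0_compat; [apply: Rdiv_lt_0_compat
    | apply/Rinv_0_lt_compat/class_sizeR_gt0].
have q_sum : \rsum_(a in T) q a <= N.
  rewrite -sumR_mull; apply: (Rle_trans _ (N * / K * K)); last by right; field; lra.
  by apply: Rmult_le_compat_l => //; apply/Rlt_le/Rdiv_lt_0_compat.
have ln_q : \rsum_(a in T) ln (q a) =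
    N * (ln N - ln K) - \rsum_(a in T) ln (INR (class_size S a)).
  rewrite -sumR_const /Rminus -sumR_opp -big_split; apply: eq_bigr => a Ta.
  have m0 := class_sizeR_gt0 S Ta; have mi := Rinv_0_lt_compat _ m0.
  have Ki := Rinv_0_lt_compat _ K0.
  by rewrite /q !ln_mult ?ln_Rinv //; apply: Rmult_lt_0_compat.
have := sum_ln_le0 q_gt0 q_sum; rewrite ln_q /entropy -/N => le0.
set L := \rsum_(a in T) ln (INR (class_size S a)) in le0 *.
have -> : ln N - / N * L = ln K + / N * (N * (ln N - ln K) - L) by field; lra.
have := Rinv_0_lt_compat _ N0; nra.
Qed.

Lemma classes_le_card (Y : finType) (f : {ffun I -> U} -> Y) (Dj : {set Y}) S :
  (forall a, a \in T -> f a \in Dj) ->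
  {in T &, forall a b, agree S a b = (f a == f b)} ->
  \rsum_(a in T) / INR (class_size S a) <= INR #|Dj|.
Proof.
move=> fD agree_f.
rewrite (eq_bigr (fun a => \rsum_(y in Dj) (if f a == y then / INR (class_size S a) else R0)));
  last first.
  move=> a Ta; rewrite sumR_count.
  suff -> : #|[set y in Dj | f a == y]| = 1%N by rewrite Rmult_1_l.
  rewrite -(cards1 (f a)); apply: eq_card => y; rewrite !inE.
  by apply/andP/eqP => [[_ /eqP <-]|->] //; rewrite fD.
rewrite exchange_big /= -(Rmult_1_r (INR #|Dj|)) -sumR_const.
apply: sumR_le => y _; rewrite sumR_guard; apply: sum_inv_le1 => a.
rewrite inE => /andP [Ta /eqP fay].
apply/subset_leq_card/subsetP => b; rewrite !inE => /andP [Tb /eqP fby].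
by rewrite Tb agree_f // fay fby eqxx.
Qed.

(* Key estimate for submodularity, for a fixed pair (a, b): the t that agree
   with a on A and with b on B all lie in one E-class, and exist only if a, b
   agree on S. *)
Lemma class_pair_bound (S A B E : {set I}) a b :
  S \subset A -> S \subset B -> E \subset A :|: B -> a \in T ->
  \rsum_(t in T) (if agree A t a && agree B t b
                  then / (INR (class_size S t) * INR (class_size E t)) else R0)
   <= (if agree S a b then / INR (class_size S a) else R0).
Proof.
move=> sA sB sE Ta; rewrite sumR_guard; case: ifP => Sab.
- have mS := class_sizeR_gt0 S Ta.
  rewrite (eq_bigr (fun t => / INR (class_size S a) * / INR (class_size E t))); last first.
    move=> t; rewrite inE => /andP [_ /andP [Ata _]].
    by rewrite (class_size_agree (agree_sub sA Ata)) Rinv_mult.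
  rewrite -sumR_mull -[X in _ <= X]Rmult_1_r.
  apply: Rmult_le_compat_l; first exact/Rlt_le/Rinv_0_lt_compat.
  apply: sum_inv_le1 => t; rewrite inE => /andP [_ /andP [Ata Btb]].
  apply/subset_leq_card/subsetP => t'; rewrite !inE => /andP [Tt' /andP [At'a Bt'b]].
  rewrite Tt' /=; apply: (agree_sub sE); apply: agree_setU.
  + exact: agree_trans Ata (agree_sym At'a).
  + exact: agree_trans Btb (agree_sym Bt'b).
- rewrite big1; first exact: Rle_refl.
  move=> t; rewrite inE => /andP [_ /andP [Ata Btb]].
  suff : agree S a b by rewrite Sab.
  exact: agree_trans (agree_sym (agree_sub sA Ata)) (agree_sub sB Btb).
Qed.

(* Summing the previous bound over all pairs (a, b). *)
Lemma class_ratio_sum (S A B E : {set I}) :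
  S \subset A -> S \subset B -> E \subset A :|: B ->
  \rsum_(t in T) (INR (class_size A t) * INR (class_size B t) *
                  / (INR (class_size S t) * INR (class_size E t))) <= INR #|T|.
Proof.
move=> sA sB sE.
pose w t := / (INR (class_size S t) * INR (class_size E t)).
have pairs t : INR (class_size A t) * INR (class_size B t) * w t =
    \rsum_(a in T) \rsum_(b in T) (if agree A t a && agree B t b then w t else R0).
  rewrite /class_size -[INR #|_|]Rmult_1_r -(sumR_count T (agree A t)).
  rewrite -[INR #|[set b in T | agree B t b]|]Rmult_1_r -(sumR_count T (agree B t)).
  rewrite Rmult_assoc sumR_mulr; apply: eq_bigr => a _.
  rewrite sumR_mulr sumR_mull; by apply: eq_bigr => b _; case: (agree A t a); case: (agree B t b) => /=; ring.
rewrite (eq_bigr _ (fun t _ => pairs t)) exchange_big.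
apply: (Rle_trans _ (\rsum_(a in T) \rsum_(b in T)
                      (if agree S a b then / INR (class_size S a) else R0))).
  apply: sumR_le => a Ta; rewrite exchange_big; apply: sumR_le => b _.
  exact: class_pair_bound.
right; rewrite -[RHS]Rmult_1_r -sumR_const; apply: eq_bigr => a Ta.
by rewrite sumR_count; have := class_sizeR_gt0 S Ta; rewrite /class_size => ?; field; lra.
Qed.

Lemma entropy_submod (S A B E : {set I}) :
  S \subset A -> S \subset B -> E \subset A :|: B ->
  0 <= entropy A + entropy B - entropy S - entropy E.
Proof.
move=> sA sB sE; have N0 := card_T_gt0.
pose m X t := INR (class_size X t).
pose q t := m A t * m B t * / (m S t * m E t).
have m_gt0 t : t \in T -> [/\ 0 < m A t, 0 < m B t, 0 < m S t & 0 < m E t].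
  by move=> Tt; split; apply: class_sizeR_gt0.
have q_gt0 t : t \in T -> 0 < q t.
  move=> /m_gt0 [mA mB mS mE]; apply: Rmult_lt_0_compat.
    exact: Rmult_lt_0_compat.
  exact/Rinv_0_lt_compat/Rmult_lt_0_compat.
have := sum_ln_le0 q_gt0 (class_ratio_sum sA sB sE).
rewrite (eq_bigr (fun t => ln (m A t) + ln (m B t) + - ln (m S t) + - ln (m E t))); last first.
  move=> t /m_gt0 [mA mB mS mE]; have mSE := Rmult_lt_0_compat _ _ mS mE.
  have mAB := Rmult_lt_0_compat _ _ mA mB.
  rewrite /q ln_mult ?ln_Rinv ?ln_mult //; first ring.
  exact: Rinv_0_lt_compat.
rewrite !big_split !sumR_opp /entropy /m /= => le0.
set LA := \rsum_(a in T) _ in le0 *; set LB := \rsum_(a in T) _ in le0 *.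
set LS := \rsum_(a in T) _ in le0 *; set LE := \rsum_(a in T) _ in le0 *.
set N := INR #|T| in N0 *.
have -> : ln N - / N * LA + (ln N - / N * LB) - (ln N - / N * LS) - (ln N - / N * LE) =
  / N * - (LA + LB + - LS + - LE) by ring.
by apply: Rmult_le_pos; [apply/Rlt_le/Rinv_0_lt_compat | lra].
Qed.

End Entropy.

Lemma agree_tuple k (U : finType) m (u : m.-tuple 'I_k) (a b : {ffun 'I_k -> U}) :
  agree [set x in val u] a b = (map_tuple a u == map_tuple b u).
Proof.
apply/forall_inP/eqP => [ab|/(congr1 val) /= /eq_in_map ab x].
  by apply: val_inj => /=; apply/eq_in_map => x ux; apply/eqP/ab; rewrite inE.
by rewrite inE => /ab ->.
Qed.

Section ScaledEntropyFeasible.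
(* F is declared without implicit arguments, so that it takes its relation
   index explicitly as in Defs. *)
Local Unset Implicit Arguments.
Variables (k n : nat) (ar : 'I_n -> nat) (F : fds ar) (body : seq (atom k ar)).
Local Set Implicit Arguments.
Variables (U : finType) (D : db ar U) (T : {set {ffun 'I_k -> U}}).
Hypothesis D_fds : db_sat_fds F D.
Hypothesis T_gt0 : (0 < #|T|)%N.
Hypothesis T_holds : {in T, forall theta, holds body D theta}.

Lemma holds_atom theta A : theta \in T -> A \in body ->
  map_tuple theta (tagged A) \in D (tag A).
Proof. by move=> /T_holds /allP; apply. Qed.

(* The projection onto an atom takes its values in R_j^D. *)
Lemma entropy_atom_le A : A \in body -> entropy T (atom_vars A) <= ln (INR (rmax D)).
Proof.
move=> bA; have [theta Ttheta] : exists theta, theta \in T by apply/card_gt0P.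
have D_gt0 : (0 < #|D (tag A)|)%N.
  by apply/card_gt0P; exists (map_tuple theta (tagged A)); apply: holds_atom.
apply: (Rle_trans _ (ln (INR #|D (tag A)|))).
  apply: (entropy_le_ln T_gt0 (INR_gt0 D_gt0)).
  apply: (classes_le_card (f := fun th => map_tuple th (tagged A))).
    by move=> a Ta; apply: holds_atom.
  by move=> a b _ _; rewrite agree_tuple.
apply: ln_le_ln (INR_gt0 D_gt0) _; apply: INR_leq.
exact: (@leq_bigmax _ (fun j : 'I_n => #|D j|) (tag A)).
Qed.

Lemma entropy_fd A V a : A \in body -> F (tag A) V a ->
  entropy T ([set tnth (tagged A) a] :|: [set tnth (tagged A) p | p in V]) =
  entropy T [set tnth (tagged A) p | p in V].
Proof.
move=> bA FVa; apply: entropy_ext => th Tth; apply: eq_card => b; rewrite !inE.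
case Tb: (b \in T) => //=; apply/idP/idP => [|agV].
  by apply: agree_sub; apply: subsetUr.
apply: agree_setU => //; apply/forall_inP => x; rewrite inE => /eqP ->; apply/eqP.
have := D_fds FVa (holds_atom Tth bA) (holds_atom Tb bA); rewrite !tnth_map; apply.
move=> p Vp; rewrite !tnth_map; apply/eqP.
by move/forall_inP: agV; apply; apply/imsetP; exists p.
Qed.

Lemma scaled_entropy_feasible c : 0 <= c -> c * ln (INR (rmax D)) <= 1 ->
  lp_feasible F body (fun S => c * entropy T S).
Proof.
move=> c0 cL; split; [|split; [|split; [|split]]].
- by rewrite entropy_set0 // Rmult_0_r.
- move=> A bA; apply: Rle_trans cL.
  by apply: Rmult_le_compat_l => //; apply: entropy_atom_le.
- by move=> A bA V a FVa; rewrite entropy_fd //; ring.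
- move=> i; rewrite -Rmult_minus_distr_l; apply: Rmult_le_pos => //.
  by apply/Rge_le/Rge_minus/Rle_ge; apply: entropy_mono => //; apply: subsetT.
- move=> i j S _ _ _; rewrite /mutinf.
  have ijS : i |: (j |: S) \subset (i |: S) :|: (j |: S).
    by apply/subsetP => x; rewrite !inE => /or3P [->|->|->]; rewrite ?orbT.
  have := entropy_submod T_gt0 (subsetUr _ _) (subsetUr _ _) ijS; nra.
Qed.

End ScaledEntropyFeasible.

Lemma answer_witnesses k n (ar : 'I_n -> nat) (U : finType) a0 (u0 : a0.-tuple 'I_k)
    (body : seq (atom k ar)) (D : db ar U) :
  exists T : {set {ffun 'I_k -> U}}, [/\ #|T| = #|answer u0 body D|,
    {in T, forall theta, holds body D theta} &
    {in T &, forall theta theta' : {ffun 'I_k -> U},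
       map_tuple theta u0 = map_tuple theta' u0 -> theta = theta'}].
Proof.
set Ans := answer u0 body D.
have [Ans0|/card_gt0P [t0 /imsetP [th0 _ _]]] := posnP #|Ans|.
  by exists set0; split; rewrite ?cards0 // => th; rewrite inE.
pose g t := odflt th0 [pick th | holds body D th && (map_tuple th u0 == t)].
have gP t : t \in Ans -> holds body D (g t) /\ map_tuple (g t) u0 = t.
  case/imsetP=> th; rewrite inE => hth ->; rewrite /g; case: pickP => [th' /andP [? /eqP] //|].
  by move/(_ th); rewrite hth eqxx.
have g_inj : {in Ans &, injective g}.
  by move=> t t' At At' gtt; rewrite -(proj2 (gP t At)) -(proj2 (gP t' At')) gtt.
exists (g @: Ans); split; first exact: card_in_imset g_inj.
  by move=> _ /imsetP [t At ->]; exact: (proj1 (gP t At)).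
move=> _ _ /imsetP [t At ->] /imsetP [t' At' ->] /= e.
by rewrite -(proj2 (gP t At)) e (proj2 (gP t' At')).
Qed.

Lemma le_of_scalings (L x s : R) : 0 <= L ->
  (forall c, 0 <= c -> c * L <= 1 -> c * x <= s) -> x <= s * L.
Proof.
case/Rle_lt_or_eq_dec => [L0 | <-] scal.
  have := scal (/ L) (Rlt_le _ _ (Rinv_0_lt_compat _ L0)) (ltac:(right; field; lra)).
  have -> : / L * x = x / L by field; lra.
  by move/(Rmult_le_compat_r L _ _ (Rlt_le _ _ L0)); rewrite /Rdiv Rmult_assoc Rinv_l; lra.
rewrite Rmult_0_r; apply: Rnot_lt_le => x0.
have c0 : 0 <= (Rabs s + 1) / x by apply/Rlt_le/Rdiv_lt_0_compat => //; have := Rabs_pos s; lra.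
have := scal _ c0 ltac:(lra).
have -> : (Rabs s + 1) / x * x = Rabs s + 1 by field; lra.
by have := Rle_abs s; lra.
Qed.

Lemma le_Rpower_of_ln x r y : 0 < x -> ln x <= y * ln r -> x <= Rpower r y.
Proof.
move=> x0 le_ln; rewrite /Rpower -(exp_ln _ x0).
case: (Rle_lt_or_eq_dec _ _ le_ln) => [lt|->]; last exact: Rle_refl.
by apply/Rlt_le/exp_increasing.
Qed.

Theorem theorem1 (k n : nat) (ar : 'I_n -> nat) (F : fds ar)
  (body : seq (atom k ar)) (a0 : nat) (u0 : a0.-tuple 'I_k)
  (Hrel : forall j : 'I_n, exists2 A, A \in body & tag A = j)
  (Hvars : forall x : 'I_k, exists2 A, A \in body & x \in atom_vars A)
  (Hchase : is_chased F body)
  (s : R) (Hs : lp_opt F body u0 s)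
  (U : finType) (D : db ar U) (HD : db_sat_fds F D)
  (Hne : forall j : 'I_n, D j != set0) :
  Rle (INR #|answer u0 body D|) (Rpower (INR (rmax D)) s).
Proof.
have [T [cardT T_holds T_inj]] := answer_witnesses u0 body D.
have [Ans0|Ans_gt0] := posnP #|answer u0 body D|.
  by rewrite Ans0 /Rpower; apply/Rlt_le/exp_pos.
have T_gt0 : (0 < #|T|)%N by rewrite cardT.
have H_head : entropy T [set x in val u0] = ln (INR #|answer u0 body D|).
  rewrite -cardT; apply: entropy_separating => a b Ta Tb.
  by rewrite agree_tuple => /eqP; apply: T_inj.
apply: le_Rpower_of_ln; first exact: INR_gt0.
apply: le_of_scalings (ln_nat_ge0 _) _ => c c0 cL.
rewrite -H_head; apply: (proj2 Hs (fun S => c * entropy T S)).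
exact (scaled_entropy_feasible HD T_gt0 T_holds c0 cL).
Qed.
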